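(* In the setting described in the context, the map $\xi:X_{\mathfrak L_1}\times\mathbb Z_+\to X_{\mathfrak L_2}\times\mathbb Z_+$, $\xi(x,n)=(\psi_0(x),\,g_{(\pi_1(x)_{[1,L]},\,v^L_L(x))}(n))$, is a homeomorphism (where $\mathbb Z_+$ carries the discrete topology).
   Context: $\mathbb Z_+=\{0,1,2,\dots\}$, $\mathbb N=\{1,2,\dots\}$. A $\lambda$-graph system $\mathfrak L=(V,E,\lambda,\iota)$ over a finite alphabet $\Sigma$ consists of finite nonempty pairwise disjoint vertex sets $V_l$ ($l\in\mathbb Z_+$); finite pairwise disjoint edge sets $E_{l,l+1}$, each $e\in E_{l,l+1}$ having a source $s(e)\in V_l$ and a terminal $t(e)\in V_{l+1}$; a labeling map $\lambda:E\to\Sigma$; and surjections $\iota:V_{l+1}\to V_l$; such that every vertex is the source of some edge, every vertex in $V_l$ ($l\ge1$) is the terminal of some edge, and (local property) for all $l\ge1$, $u\in V_{l-1}$, $v\in V_{l+1}$ there is a label-preserving bijection between $\{e\in E_{l,l+1}: \iota(s(e))=u,\ t(e)=v\}$ and $\{e\in E_{l-1,l}: s(e)=u,\ t(e)=\iota(v)\}$. Left-resolving: $t(e)=t(f)$, $\lambda(e)=\lambda(f)$ imply $e=f$. $\Omega_{\mathfrak L}=\{(u^l)_{l}\in\prod_l V_l: \iota(u^{l+1})=u^l\}$ (projective limit topology). $E_{\mathfrak L}$ = set of $(u,\alpha,w)\in\Omega_{\mathfrak L}\times\Sigma\times\Omega_{\mathfrak L}$ such that for each $l$ some $e\in E_{l,l+1}$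 has $s(e)=u^l$, $t(e)=w^{l+1}$, $\lambda(e)=\alpha$. $X_{\mathfrak L}$ = set of $x=(\alpha_i,u_i)_{i\in\mathbb N}$ in $\Sigma\times\Omega_{\mathfrak L}$ with $(u_i,\alpha_{i+1},u_{i+1})\in E_{\mathfrak L}$ for all $i$ and $(u_0,\alpha_1,u_1)\in E_{\mathfrak L}$ for some $u_0$; relative product topology; $\sigma_{\mathfrak L}$ the left shift. For such $x$: $x_{[k,\infty)}=(\alpha_i,u_i)_{i\ge k}$; $\pi_{\mathfrak L}(x)=(\alpha_i)_{i\in\mathbb N}$, $\pi_{\mathfrak L}(x)_{[1,k]}=(\alpha_1,\dots,\alpha_k)$; $v^l_n(x)$ denotes the $l$-th coordinate $u_n^l$ of $u_n$. $X_\Lambda=\pi_{\mathfrak L}(X_{\mathfrak L})$, $B_k(X_\Lambda)$ its words of length $k$. Setting: $\mathfrak L_1,\mathfrak L_2$ are left-resolving $\lambda$-graph systems; write $\pi_i=\pi_{\mathfrak L_i}$, $\Lambda_i$ for the presented subshifts. $\psi_0:X_{\mathfrak L_1}\to X_{\mathfrak L_2}$ is a continuous surjective local homeomorphism with $\sigma_{\mathfrak L_2}\circ\psi_0=\psi_0\circ\sigma_{\mathfrak L_1}$, and $1\le l\le L$ are integers such that (a) $\psi_0(x)=\psi_0(x')$ implies $x_{[l,\infty)}=x'_{[l,\infty)}$; (b) there is a map $\Psi:B_L(X_{\Lambda_1})\to B_l(X_{\Lambda_2})$ with $\pi_2(\psi_0(x))_{[1,l]}=\Psi(\pi_1(x)_{[1,L]})$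 for all $x\in X_{\mathfrak L_1}$. For $v\in V_L$ (vertices of $\mathfrak L_1$), $B_L(\Lambda_1,v)$ is the set of $\mu\in B_L(X_{\Lambda_1})$ with $\mu=\pi_1(x)_{[1,L]}$ for some $x\in X_{\mathfrak L_1}$ with $v^L_L(x)=v$. For $\mu,\mu'\in B_L(\Lambda_1,v)$, $\mu\sim_v\mu'$ means: there exist $x,x'\in X_{\mathfrak L_1}$ with $\pi_1(x)_{[1,L]}=\mu$, $\pi_1(x')_{[1,L]}=\mu'$, $v^L_L(x)=v^L_L(x')=v$ and $\psi_0(x)=\psi_0(x')$; this is an equivalence relation on the finite set $B_L(\Lambda_1,v)$. For every $v\in V_L$ and every $\sim_v$-class $C\subset B_L(\Lambda_1,v)$, fix a partition $\mathbb Z_+=\bigsqcup_{\nu\in C}\mathbb Z_+(\nu,v)$ into infinite subsets and bijections $g_{(\nu,v)}:\mathbb Z_+\to\mathbb Z_+(\nu,v)$, $\nu\in C$. *)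

From mathcomp Require Import all_boot.
Set Implicit Arguments. Unset Strict Implicit. Unset Printing Implicit Defensive.

(* A topology on a type T is given by its family of open sets           *)
(* opn : (T -> Prop) -> Prop; subsets are predicates A : T -> Prop and  *)
(* carry the subspace topology.                                         *)

Definition sub_open (T : Type) (opn : (T -> Prop) -> Prop) (A W : T -> Prop) : Prop :=
  (forall t, W t -> A t) /\
  exists O, opn O /\ forall t, A t -> (W t <-> O t).

Definition continuous_on (S T : Type) (opnS : (S -> Prop) -> Prop) (A : S -> Prop)
    (opnT : (T -> Prop) -> Prop) (B : T -> Prop) (f : S -> T) : Prop :=
  (forall s, A s -> B (f s)) /\
  forall W, sub_open opnT B W -> sub_open opnS A (fun s => A s /\ W (f s)).

Definition homeo_on (S T : Type) (opnS : (S -> Prop) -> Prop) (A : S -> Prop)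
    (opnT : (T -> Prop) -> Prop) (B : T -> Prop) (f : S -> T) : Prop :=
  exists g : T -> S,
    (forall s, A s -> g (f s) = s) /\ (forall t, B t -> f (g t) = t) /\
    continuous_on opnS A opnT B f /\ continuous_on opnT B opnS A g.

Definition image_of (S T : Type) (f : S -> T) (U : S -> Prop) : T -> Prop :=
  fun t => exists s, U s /\ f s = t.

Definition surjective_on (S T : Type) (A : S -> Prop) (B : T -> Prop) (f : S -> T) : Prop :=
  forall t, B t -> exists s, A s /\ f s = t.

Definition local_homeo_on (S T : Type) (opnS : (S -> Prop) -> Prop) (A : S -> Prop)
    (opnT : (T -> Prop) -> Prop) (B : T -> Prop) (f : S -> T) : Prop :=
  (forall s, A s -> B (f s)) /\
  forall s, A s -> exists U : S -> Prop,
    sub_open opnS A U /\ U s /\ sub_open opnT B (image_of f U) /\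
    homeo_on opnS U opnT (image_of f U) f.

(* V l = V_l, E l = E_{l,l+1}, iota l : V_{l+1} -> V_l.                 *)

Record lgs (Sigma : finType) := Lgs {
  V : nat -> finType;
  E : nat -> finType;
  src : forall l, E l -> V l;
  tgt : forall l, E l -> V l.+1;
  lab : forall l, E l -> Sigma;
  iot : forall l, V l.+1 -> V l;
  V_nonempty : forall l, 0 < #|V l|;
  iot_surj : forall l (v : V l), exists w : V l.+1, iot w = v;
  src_all : forall l (v : V l), exists e : E l, src e = v;
  tgt_all : forall l (v : V l.+1), exists e : E l, tgt e = v;
  (* local property, stated for l = k+1 >= 1 *)
  local_prop : forall k (u : V k) (v : V k.+2),
    exists f : {e : E k.+1 | iot (src e) = u /\ tgt e = v} ->
               {e : E k | src e = u /\ tgt e = iot v},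
      bijective f /\ forall e, lab (proj1_sig (f e)) = lab (proj1_sig e)
}.

Definition left_resolving (Sigma : finType) (L : lgs Sigma) : Prop :=
  forall l (e f : E L l), tgt e = tgt f -> lab e = lab f -> e = f.

(* ambient product  prod_l V_l  and the projective limit Omega_L in it *)
Definition OmegaT (Sigma : finType) (L : lgs Sigma) : Type := forall l, V L l.

Definition in_Omega (Sigma : finType) (L : lgs Sigma) (u : OmegaT L) : Prop :=
  forall l, iot (u l.+1) = u l.

Definition edgeL (Sigma : finType) (L : lgs Sigma) (u : OmegaT L) (a : Sigma) (w : OmegaT L) : Prop :=
  in_Omega u /\ in_Omega w /\
  forall l, exists e : E L l, src e = u l /\ tgt e = w l.+1 /\ lab e = a.

(* Ambient space (Sigma x prod_l V_l)^N.  Index shift: x i is the pair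
   (alpha_{i+1}, u_{i+1}) of the paper (paper indices start at 1). *)
Definition XT (Sigma : finType) (L : lgs Sigma) : Type := nat -> Sigma * OmegaT L.

Definition inX (Sigma : finType) (L : lgs Sigma) (x : XT L) : Prop :=
  (forall i, edgeL (x i).2 (x i.+1).1 (x i.+1).2) /\
  exists u0, edgeL u0 (x 0).1 (x 0).2.

Definition shiftX (Sigma : finType) (L : lgs Sigma) (x : XT L) : XT L :=
  fun i => x i.+1.

Definition agree (Sigma : finType) (L : lgs Sigma) (N : nat) (x y : XT L) : Prop :=
  forall i, i < N -> (x i).1 = (y i).1 /\ forall l, l < N -> (x i).2 l = (y i).2 l.

(* product topology on the ambient space (Sigma discrete, each V_l discrete);
   the cylinders given by [agree N x] form a basis *)
Definition openX (Sigma : finType) (L : lgs Sigma) (O : XT L -> Prop) : Prop :=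
  forall x, O x -> exists N, forall y, agree N x y -> O y.

(* product topology on (ambient) x Z_+, Z_+ discrete *)
Definition openXN (Sigma : finType) (L : lgs Sigma) (O : XT L * nat -> Prop) : Prop :=
  forall p, O p -> exists N, forall q, agree N p.1 q.1 -> p.2 = q.2 -> O q.

Definition inXN (Sigma : finType) (L : lgs Sigma) (p : XT L * nat) : Prop := inX p.1.

Definition word (Sigma : finType) (L : lgs Sigma) (k : nat) (x : XT L) : seq Sigma :=
  [seq (x i).1 | i <- iota 0 k].

(* v^l_n(x) = u_n^l, for n >= 1 *)
Definition vert (Sigma : finType) (L : lgs Sigma) (l n : nat) (x : XT L) : V L l :=
  (x n.-1).2 l.

Definition inB (Sigma : finType) (L : lgs Sigma) (LL : nat) (v : V L LL) (mu : seq Sigma) : Prop :=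
  exists x, inX x /\ word LL x = mu /\ vert LL LL x = v.

Definition simv (Sigma1 Sigma2 : finType) (L1 : lgs Sigma1) (L2 : lgs Sigma2)
    (psi0 : XT L1 -> XT L2) (LL : nat) (v : V L1 LL) (mu mu' : seq Sigma1) : Prop :=
  exists x x', inX x /\ inX x' /\ word LL x = mu /\ word LL x' = mu' /\
    vert LL LL x = v /\ vert LL LL x' = v /\ psi0 x = psi0 x'.

(* The map xi is injective: two points in one psi0-fibre agree from coordinate l on by (a),
   and left-resolvingness then determines them from their first L labels, which g recovers
   because it separates ~_v-classes and is injective on each. It is surjective: every word
   ~_v-equivalent to that of x is realised in the fibre over psi0 x by splicing the labels of a
   witness in front of the tail of x; the local property lets one run edges backwards, and left
   resolvingness makes the vertices of the two paths agree on enough levels for the splice.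
   Continuity of xi holds because the first L labels and v^L_L are locally constant; continuity
   of its inverse comes from the local sections of the local homeomorphism psi0, again through
   injectivity of xi. *)

From mathcomp Require Import all_boot zify.
From Stdlib Require Import FunctionalExtensionality ClassicalEpsilon.
Set Implicit Arguments. Unset Strict Implicit. Unset Printing Implicit Defensive.

Definition nbhd_open (S : Type) (R : nat -> S -> S -> Prop) (O : S -> Prop) : Prop :=
  forall s, O s -> exists N, forall s', R N s s' -> O s'.

Definition nbhd_continuous (S T : Type) (RS : nat -> S -> S -> Prop)
    (RT : nat -> T -> T -> Prop) (A : S -> Prop) (f : S -> T) : Prop :=
  forall s, A s -> forall N, exists M, forall s', A s' -> RS M s s' -> RT N (f s) (f s').

Section NbhdContinuity.

Variables (S T : Type) (RS : nat -> S -> S -> Prop) (RT : nat -> T -> T -> Prop).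
Variables (opnS : (S -> Prop) -> Prop) (opnT : (T -> Prop) -> Prop).
Hypothesis opnSE : forall O, opnS O <-> nbhd_open RS O.
Hypothesis opnTE : forall O, opnT O <-> nbhd_open RT O.
Variables (A : S -> Prop) (B : T -> Prop) (f : S -> T).

Lemma continuous_on_nbhd :
  (forall N t, RT N t t) -> (forall N t1 t2 t3, RT N t1 t2 -> RT N t2 t3 -> RT N t1 t3) ->
  continuous_on opnS A opnT B f -> nbhd_continuous RS RT A f.
Proof.
move=> RT_refl RT_trans [fAB fcont] s As N.
have ball_open : sub_open opnT B (fun t => B t /\ RT N (f s) t).
  split; first by move=> t [].
  exists (RT N (f s)); split; last by move=> t Bt; split=> [[]|].
  by apply/opnTE => t Nt; exists N => t'; apply: RT_trans.
have [_ [O [/opnSE Oopen AO]]] := fcont _ ball_open.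
have [|M HM] := Oopen s; first by apply/(AO s As); do 2!split=> //; exact: fAB.
by exists M => s' As' Ms'; case: ((AO s' As').2 (HM _ Ms')) => _ [].
Qed.

Lemma nbhd_continuous_on :
  (forall N s, RS N s s) -> (forall N s1 s2 s3, RS N s1 s2 -> RS N s2 s3 -> RS N s1 s3) ->
  (forall s, A s -> B (f s)) -> nbhd_continuous RS RT A f -> continuous_on opnS A opnT B f.
Proof.
move=> RS_refl RS_trans fAB fcont; split=> // W [WB [O [/opnTE Oopen WO]]].
split; first by move=> s [].
exists (fun s => exists M, forall s', RS M s s' -> A s' -> W (f s')); split.
  apply/opnSE => s [M HM]; exists M => s1 Ms1; exists M => s' M1s' As'.
  by apply: HM (RS_trans _ _ _ _ Ms1 M1s') As'.
move=> s As; split=> [[_ Wfs]|[M HM]]; last by split=> //; apply: HM (RS_refl _ _) As.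
have [N HN] := Oopen _ ((WO _ (fAB _ As)).1 Wfs).
have [M HM] := fcont s As N.
by exists M => s' Ms' As'; apply/WO; [exact: fAB | exact/HN/HM].
Qed.

End NbhdContinuity.

Section NbhdHomeomorphism.

Variables (S T : Type) (RS : nat -> S -> S -> Prop) (RT : nat -> T -> T -> Prop).
Variables (opnS : (S -> Prop) -> Prop) (opnT : (T -> Prop) -> Prop).
Hypothesis opnSE : forall O, opnS O <-> nbhd_open RS O.
Hypothesis opnTE : forall O, opnT O <-> nbhd_open RT O.
Hypothesis RS_refl : forall N s, RS N s s.
Hypothesis RS_trans : forall N s1 s2 s3, RS N s1 s2 -> RS N s2 s3 -> RS N s1 s3.
Hypothesis RT_refl : forall N t, RT N t t.
Hypothesis RT_trans : forall N t1 t2 t3, RT N t1 t2 -> RT N t2 t3 -> RT N t1 t3.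
Variables (A : S -> Prop) (B : T -> Prop) (f : S -> T).

Lemma local_homeo_on_lift :
  (forall M N t t', N <= M -> RT M t t' -> RT N t t') ->
  local_homeo_on opnS A opnT B f ->
  forall s, A s -> forall N, exists M, forall t, B t -> RT M (f s) t ->
    exists s', A s' /\ f s' = t /\ RS N s s'.
Proof.
move=> RT_le [fAB floc] s As N.
have [U [[UA _] [Us [[_ [O [/opnTE Oopen imO]]] [h [hK [fK [_ hcont]]]]]]]] := floc s As.
have fs_im : image_of f U (f s) by exists s.
have [M1 HM1] := continuous_on_nbhd opnTE opnSE RS_refl RS_trans hcont fs_im N.
have [M2 HM2] := Oopen _ ((imO _ (fAB _ As)).1 fs_im).
exists (maxn M1 M2) => t Bt Mt.
have t_im : image_of f U t.
  by apply/imO => //; apply: HM2; apply: RT_le Mt; rewrite leq_maxr.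
exists (h t); split; first exact/UA/hcont.1.
split; first exact: fK.
rewrite -{1}(hK s Us); apply: HM1 => //.
by apply: RT_le Mt; rewrite leq_maxl.
Qed.

Lemma homeo_on_nbhd : inhabited S ->
  (forall s, A s -> B (f s)) ->
  (forall s s', A s -> A s' -> f s = f s' -> s = s') ->
  surjective_on A B f ->
  nbhd_continuous RS RT A f ->
  (forall s, A s -> forall N, exists M, forall s', A s' -> RT M (f s) (f s') -> RS N s s') ->
  homeo_on opnS A opnT B f.
Proof.
move=> inhS fAB finj fsurj fcont fopen.
pose g t := epsilon inhS (fun s => A s /\ f s = t).
have gK t : B t -> A (g t) /\ f (g t) = t.
  by move=> Bt; apply: (epsilon_spec inhS (fun s => A s /\ f s = t)); exact: fsurj.
exists g; split.
  by move=> s As; have [Ags fgs] := gK _ (fAB _ As); exact: finj Ags As fgs.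
split; first by move=> t /gK [].
split; first exact: nbhd_continuous_on.
apply: nbhd_continuous_on => // [t /gK [] //|t Bt N].
have [Agt fgt] := gK _ Bt; have [M HM] := fopen _ Agt N.
exists M => t' Bt' Mt'; have [Agt' fgt'] := gK _ Bt'.
by apply: HM => //; rewrite fgt fgt'.
Qed.

End NbhdHomeomorphism.

Section LambdaGraphPaths.

Variables (Sigma : finType) (L : lgs Sigma).
Hypothesis HL : left_resolving L.

Lemma edgeL_src_agree (u u' w w' : OmegaT L) a k :
  edgeL u a w -> edgeL u' a w' -> w k.+1 = w' k.+1 -> u k = u' k.
Proof.
move=> [_ [_ uw]] [_ [_ uw']] wk.
have [e [<- [te le]]] := uw k; have [e' [<- [te' le']]] := uw' k.
by have -> : e = e' by apply: HL; rewrite ?te ?te' ?wk ?le ?le'.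
Qed.

Lemma edgeL_uniq (u u' w : OmegaT L) a : edgeL u a w -> edgeL u' a w -> u = u'.
Proof.
by move=> uw u'w; apply: functional_extensionality_dep => k; exact: edgeL_src_agree uw u'w _.
Qed.

Lemma edge_lift (w : OmegaT L) a : in_Omega w ->
  (exists e : E L 0, tgt e = w 1 /\ lab e = a) ->
  forall k, exists e : E L k, tgt e = w k.+1 /\ lab e = a.
Proof.
move=> w_in e0 k; elim: k => [//|k [e [te le]]].
have [f [[f' _ ff'] lab_f]] := @local_prop _ L k (src e) (w k.+2).
have e_dom : src e = src e /\ tgt e = iot (w k.+2) by rewrite w_in.
pose e1 := f' (exist _ e e_dom).
exists (proj1_sig e1); split; first exact: (proj2 (proj2_sig e1)).
by rewrite -lab_f /e1 ff'.
Qed.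

(* The local property makes the level-wise sources of the [a]-edges into [w] compatible. *)
Lemma edgeL_back (w : OmegaT L) a : in_Omega w ->
  (exists e : E L 0, tgt e = w 1 /\ lab e = a) -> exists u, edgeL u a w.
Proof.
move=> w_in e0.
have lift k : exists e : E L k, (tgt e == w k.+1) && (lab e == a).
  by have [e [te le]] := edge_lift w_in e0 k; exists e; rewrite te le !eqxx.
pose e k := xchoose (lift k).
have eP k : tgt (e k) = w k.+1 /\ lab (e k) = a.
  by have /andP[/eqP ? /eqP ?] := xchooseP (lift k).
exists (fun k => src (e k)); split; last by split=> // k; exists (e k).
move=> k; have [te1 le1] := eP k.+1; have [te0 le0] := eP k.
have [f [_ lab_f]] := @local_prop _ L k (iot (src (e k.+1))) (w k.+2).
case Ef: (f (exist _ (e k.+1) (conj erefl te1))) => [e2 [se2 te2]].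
have le2 : lab e2 = a by have := lab_f (exist _ (e k.+1) (conj erefl te1)); rewrite Ef le1.
by rewrite -se2 (HL (_ : tgt e2 = tgt (e k))) // ?te2 ?te0 ?w_in // le2 le0.
Qed.

Lemma omega_agree_below (u w : OmegaT L) K :
  in_Omega u -> in_Omega w -> u K = w K -> forall k, k <= K -> u k = w k.
Proof.
move=> u_in w_in; elim: K => [|K IH] uwK k; first by rewrite leqn0 => /eqP ->.
rewrite leq_eqVlt => /orP [/eqP -> //|]; apply: IH.
by rewrite -u_in -w_in uwK.
Qed.

Lemma inX_edge (x : XT L) : inX x -> forall i, exists u, edgeL u (x i).1 (x i).2.
Proof. by move=> [x_edge [u0 x0]] [|i]; [exists u0 | exists (x i).2]. Qed.

Lemma inX_omega (x : XT L) : inX x -> forall i, in_Omega (x i).2.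
Proof. by move=> xX i; have [u [_ []]] := inX_edge xX i. Qed.

Lemma inX_shift (x : XT L) : inX x -> inX (shiftX x).
Proof. by move=> [x_edge _]; split=> [i|]; [exact: x_edge | exists (x 0).2]. Qed.

Lemma inX_levels_back (x y : XT L) : inX x -> inX y ->
  forall j i K, (forall m, i < m <= i + j -> (x m).1 = (y m).1) ->
  (forall k, k <= K + j -> (x (i + j)).2 k = (y (i + j)).2 k) ->
  forall k, k <= K -> (x i).2 k = (y i).2 k.
Proof.
move=> [x_edge _] [y_edge _]; elim=> [|j IH] i K lab_xy top_xy k kK.
  by rewrite !addn0 in top_xy; apply: top_xy.
have next : forall k, k <= K.+1 -> (x i.+1).2 k = (y i.+1).2 k.
  apply: IH => [m /andP[im mj]|k' k'K]; first by apply: lab_xy; lia.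
  by rewrite addSnnS; apply: top_xy; lia.
have xi_edge := x_edge i; rewrite (lab_xy i.+1) in xi_edge; last by lia.
exact: edgeL_src_agree xi_edge (y_edge i) (next k.+1 kK).
Qed.

Lemma inX_eq_from_labels (x y : XT L) p : inX x -> inX y ->
  (forall i, p <= i -> x i = y i) -> (forall i, i < p -> (x i).1 = (y i).1) -> x = y.
Proof.
move=> [x_edge _] [y_edge _] tail_xy lab_xy.
suff xy_below d : x (p - d) = y (p - d).
  apply: functional_extensionality => i; case: (leqP p i) => [/tail_xy //|ip].
  by have := xy_below (p - i); rewrite subKn // ltnW.
elim: d => [|d IH]; first by rewrite subn0 tail_xy.
case: (leqP p d) => pd; first by rewrite (_ : p - d.+1 = p - d) //; lia.
have pdS : (p - d.+1).+1 = p - d by lia.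
have x_edge' := x_edge (p - d.+1); have y_edge' := y_edge (p - d.+1).
rewrite pdS IH in x_edge' y_edge'.
apply: injective_projections; first by apply: lab_xy; lia.
exact: edgeL_uniq x_edge' y_edge'.
Qed.

Definition inX_from (p : nat) (x : XT L) : Prop :=
  (forall i, p <= i -> edgeL (x i).2 (x i.+1).1 (x i.+1).2) /\
  exists u0, edgeL u0 (x p).1 (x p).2.

Lemma inX_inX_from (x : XT L) p : inX x -> inX_from p x.
Proof. by move=> xX; split=> [i _|]; [exact: xX.1 | exact: inX_edge]. Qed.

(* Each backward step loses one level of agreement, hence the [p.+1] levels required at [p]. *)
Lemma inX_splice p (x y : XT L) : inX_from p x -> inX y -> (x p).1 = (y p).1 ->
  (forall k, k <= p.+1 -> (x p).2 k = (y p).2 k) ->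
  exists z, inX z /\ (forall i, p <= i -> z i = x i) /\ (forall i, i <= p -> (z i).1 = (y i).1).
Proof.
elim: p x => [|p IH] x [x_edge [u0 x_u0]] yX lab_p top_p.
  exists x; split; first by split=> [i|]; [exact: x_edge | exists u0].
  by split=> // i; rewrite leqn0 => /eqP ->.
have y_edge := yX.1 p; rewrite -lab_p in y_edge.
have u0_y k : k <= p.+1 -> u0 k = (y p).2 k.
  by move=> kp; apply: edgeL_src_agree x_u0 y_edge (top_p _ _).
have [u1 u1_u0] : exists u1, edgeL u1 (y p).1 u0.
  apply: edgeL_back; first by case: x_u0.
  have [u [_ [_ uy]]] := inX_edge yX p; have [e [_ [te le]]] := uy 0.
  by exists e; rewrite u0_y.
pose x' i := if i == p then ((y p).1, u0) else x i.
have x'_from : inX_from p x'.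
  split; last by exists u1; rewrite /x' eqxx.
  move=> i; rewrite leq_eqVlt => /orP [/eqP <-|pi].
    by rewrite /x' eqxx ifF //; lia.
  by rewrite /x' !ifF; [exact: x_edge | lia | lia].
have [||z [zX [z_tail z_lab]]] := IH x' x'_from yX; first by rewrite /x' eqxx.
  by move=> k kp; rewrite /x' eqxx /=; exact: u0_y.
exists z; split=> //; split=> [i pi|i].
  by rewrite z_tail ?/x' ?ifF //; [apply/negbTE|]; lia.
rewrite leq_eqVlt => /orP [/eqP ->|]; last exact: z_lab.
by rewrite z_tail // /x' ifF -?lab_p //; apply/negbTE; lia.
Qed.

Lemma word_label k (x y : XT L) :
  word k x = word k y -> forall i, i < k -> (x i).1 = (y i).1.
Proof.
move=> xy i ik; have := congr1 (fun s => nth (x i).1 s i) xy.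
by rewrite /word !(nth_map 0) ?size_iota // nth_iota.
Qed.

Lemma eq_word k (x y : XT L) :
  (forall i, i < k -> (x i).1 = (y i).1) -> word k x = word k y.
Proof. by move=> xy; apply/eq_in_map => i; rewrite mem_iota add0n => /andP[_]; exact: xy. Qed.

Lemma agree_refl N (x : XT L) : agree N x x.
Proof. by []. Qed.

Lemma agree_trans N (x y z : XT L) : agree N x y -> agree N y z -> agree N x z.
Proof.
move=> xy yz i iN; have [lxy vxy] := xy i iN; have [lyz vyz] := yz i iN.
by split=> [|k kN]; [rewrite lxy | rewrite vxy ?vyz].
Qed.

Lemma agree_le M N (x y : XT L) : N <= M -> agree M x y -> agree N x y.
Proof.
move=> NM xy i iN; have [lxy vxy] := xy i (leq_trans iN NM).
by split=> // k kN; apply: vxy (leq_trans kN NM).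
Qed.

Lemma agree_word_vert M K (x y : XT L) : K < M -> agree M x y ->
  word K x = word K y /\ vert K K x = vert K K y.
Proof.
move=> KM xy; split; first by apply: eq_word => i iK; case: (xy i (ltn_trans iK KM)).
by rewrite /vert; case: (xy K.-1 _) => [|_ ->] //; lia.
Qed.

Lemma openXE (O : XT L -> Prop) : openX O <-> nbhd_open (@agree _ L) O.
Proof. by []. Qed.

Definition agreeXN N (p q : XT L * nat) : Prop := agree N p.1 q.1 /\ p.2 = q.2.

Lemma openXNE (O : XT L * nat -> Prop) : openXN O <-> nbhd_open agreeXN O.
Proof.
split=> Oopen p Op; have [N HN] := Oopen p Op; exists N => q.
  by case; exact: HN.
by move=> pq1 pq2; exact: HN.
Qed.

Lemma agreeXN_refl N (p : XT L * nat) : agreeXN N p p.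
Proof. by []. Qed.

Lemma agreeXN_trans N (p q r : XT L * nat) : agreeXN N p q -> agreeXN N q r -> agreeXN N p r.
Proof. by move=> [pq1 pq2] [qr1 qr2]; split; [exact: agree_trans pq1 qr1 | rewrite pq2]. Qed.

Lemma inhabited_XT : inhabited (XT L).
Proof.
pose w : OmegaT L := fun k => xchoose (card_gt0P (V_nonempty L k)).
by have [e _] := src_all (w 0); exact: inhabits (fun _ => (lab e, w)).
Qed.

End LambdaGraphPaths.

Section XiMap.

Variables (Sigma1 Sigma2 : finType) (L1 : lgs Sigma1) (L2 : lgs Sigma2).
Hypotheses (HL1 : left_resolving L1) (HL2 : left_resolving L2).
Variable psi0 : XT L1 -> XT L2.
Hypothesis psi0X : forall x, inX x -> inX (psi0 x).
Hypothesis psi0_surj : surjective_on (@inX _ L1) (@inX _ L2) psi0.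
Hypothesis psi0_cont : nbhd_continuous (@agree _ L1) (@agree _ L2) (@inX _ L1) psi0.
Hypothesis psi0_lift : forall x, inX x -> forall N, exists M, forall y, inX y ->
  agree M (psi0 x) y -> exists x', inX x' /\ psi0 x' = y /\ agree N x x'.
Hypothesis psi0_shift : forall x, inX x -> psi0 (shiftX x) = shiftX (psi0 x).
Variables (l LL : nat).
Hypotheses (l_gt0 : 1 <= l) (l_le_LL : l <= LL).
Hypothesis psi0_fiber : forall x x', inX x -> inX x' -> psi0 x = psi0 x' ->
  forall i, l.-1 <= i -> x i = x' i.
Variable Psi : seq Sigma1 -> seq Sigma2.
Hypothesis psi0_word : forall x, inX x -> word l (psi0 x) = Psi (word LL x).
Variable g : seq Sigma1 -> V L1 LL -> nat -> nat.
Hypothesis g_inj : forall v mu, inB v mu -> injective (g mu v).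
Hypothesis g_cover : forall v mu, inB v mu -> forall n,
  exists nu, simv psi0 v mu nu /\ exists m, g nu v m = n.
Hypothesis g_disj : forall v nu nu', simv psi0 v nu nu' ->
  forall m m', g nu v m = g nu' v m' -> nu = nu'.

Definition xi (p : XT L1 * nat) : XT L2 * nat :=
  (psi0 p.1, g (word LL p.1) (vert LL LL p.1) p.2).

Lemma psi0_tail p (x x' : XT L1) : inX x -> inX x' ->
  (forall i, p <= i -> x i = x' i) -> forall i, p <= i -> psi0 x i = psi0 x' i.
Proof.
elim: p x x' => [|p IH] x x' xX x'X xx' i.
  by rewrite (_ : x = x') //; apply: functional_extensionality => j; exact: xx'.
case: i => // i pi; have := IH _ _ (inX_shift xX) (inX_shift x'X) (fun j pj => xx' j.+1 pj) i pi.
by rewrite !psi0_shift.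
Qed.

Lemma psi0_fiber_vert (x x' : XT L1) : inX x -> inX x' -> psi0 x = psi0 x' ->
  vert LL LL x = vert LL LL x'.
Proof. by move=> xX x'X xx'; rewrite /vert (psi0_fiber xX x'X xx') //; lia. Qed.

Lemma psi0_fiber_word_inj (x x' : XT L1) : inX x -> inX x' -> psi0 x = psi0 x' ->
  word LL x = word LL x' -> x = x'.
Proof.
move=> xX x'X xx' wxx'; apply: (inX_eq_from_labels HL1 xX x'X (psi0_fiber xX x'X xx')).
by move=> i il; apply: word_label wxx' _ _; lia.
Qed.

Lemma xi_inj (p q : XT L1 * nat) : inXN p -> inXN q -> xi p = xi q -> p = q.
Proof.
case: p q => [x n] [x' n'] xX x'X [xx' gnn'].
rewrite -(psi0_fiber_vert xX x'X xx') in gnn'.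
have wxx' : word LL x = word LL x'.
  by apply: g_disj gnn'; exists x, x'; do 6!split=> //; exact: psi0_fiber_vert.
rewrite -wxx' in gnn'; have xB : inB (vert LL LL x) (word LL x) by exists x.
by rewrite (g_inj xB gnn') (psi0_fiber_word_inj xX x'X xx' wxx' : x = x').
Qed.

(* Keep the tail of [x] from [l.-1] on and splice the labels of the witness [x1'] in front of it. *)
Lemma psi0_fiber_relabel (x : XT L1) nu : inX x -> simv psi0 (vert LL LL x) (word LL x) nu ->
  exists z, inX z /\ psi0 z = psi0 x /\ word LL z = nu /\ vert LL LL z = vert LL LL x.
Proof.
move=> xX [x1 [x1' [x1X [x1'X [wx1 [wx1' [vx1 [vx1' px1]]]]]]]].
set p := l.-1.
have x1_tail : forall i, p <= i -> x1 i = x1' i := psi0_fiber x1X x1'X px1.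
have lab_x1 : forall i, i < LL -> (x i).1 = (x1 i).1 := word_label (esym wx1).
have top_x1 : forall k, k <= l -> (x p).2 k = (x1 p).2 k.
  apply: (inX_levels_back HL1 xX x1X (j := LL.-1 - p)) => [m /andP[pm mLL]|k kLL].
    by apply: lab_x1; lia.
  have -> : p + (LL.-1 - p) = LL.-1 by lia.
  apply: (omega_agree_below (K := LL) (inX_omega xX _) (inX_omega x1X _)); last by lia.
  by move: vx1; rewrite /vert => ->.
have lab_p : (x p).1 = (x1' p).1 by rewrite lab_x1 ?x1_tail //; lia.
have top_p : forall k, k <= p.+1 -> (x p).2 k = (x1' p).2 k.
  by move=> k kp; rewrite top_x1 ?x1_tail //; lia.
have [z [zX [z_tail z_lab]]] := inX_splice HL1 (inX_inX_from p xX) x1'X lab_p top_p.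
have wz : word LL z = nu.
  rewrite -wx1'; apply: eq_word => i iLL; case: (leqP i p) => [/z_lab //|pi].
  by rewrite z_tail ?lab_x1 ?x1_tail //; exact: ltnW.
exists z; split=> //; split; last by split=> //; rewrite /vert z_tail //; lia.
apply: (inX_eq_from_labels HL2 (psi0X zX) (psi0X xX) (psi0_tail zX xX z_tail)).
have : word l (psi0 z) = word l (psi0 x).
  by rewrite !psi0_word // wz -wx1' -psi0_word // -px1 psi0_word // wx1.
by move/word_label=> lab_psi i ip; apply: lab_psi; lia.
Qed.

Lemma xi_surj : surjective_on (@inXN _ L1) (@inXN _ L2) xi.
Proof.
case=> y m yX; have [x [xX pxy]] := psi0_surj yX.
have xB : inB (vert LL LL x) (word LL x) by exists x.
have [nu [x_nu [m0 gm0]]] := g_cover xB m.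
have [z [zX [pz [wz vz]]]] := psi0_fiber_relabel xX x_nu.
by exists (z, m0); split=> //; rewrite /xi /= pz pxy wz vz gm0.
Qed.

Lemma xi_cont : nbhd_continuous (@agreeXN _ L1) (@agreeXN _ L2) (@inXN _ L1) xi.
Proof.
case=> x n xX N; have [M psi0_M] := psi0_cont xX N.
exists (maxn M LL.+1) => [[x' n']] x'X [xx' nn']; rewrite /= in xx' nn'.
have [wxx' vxx'] := agree_word_vert (leq_maxr M LL.+1) xx'.
split; last by rewrite /xi /= wxx' vxx' nn'.
by apply: psi0_M => //; apply: agree_le xx'; rewrite leq_maxl.
Qed.

Lemma xi_open (p : XT L1 * nat) : inXN p -> forall N, exists M, forall q, inXN q ->
  agreeXN M (xi p) (xi q) -> agreeXN N p q.
Proof.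
case: p => x n xX N; have [M lift_M] := psi0_lift xX (maxn N LL.+1).
exists M => [[x' n']] x'X [pxx' gnn']; rewrite /xi /= in pxx' gnn'.
have [x'' [x''X [px'' xx'']]] := lift_M _ (psi0X x'X) pxx'.
have [wxx'' vxx''] := agree_word_vert (leq_maxr N LL.+1) xx''.
have : xi (x'', n) = xi (x', n') by rewrite /xi /= px'' -wxx'' -vxx'' gnn'.
move/(xi_inj (x''X : inXN (x'', n)) x'X) => [<- <-].
by split=> //; apply: agree_le xx''; rewrite leq_maxl.
Qed.

End XiMap.

Theorem lemma7p6 (Sigma1 Sigma2 : finType) (L1 : lgs Sigma1) (L2 : lgs Sigma2)
  (HL1 : left_resolving L1) (HL2 : left_resolving L2)
  (psi0 : XT L1 -> XT L2)
  (Hcont : continuous_on (@openX _ L1) (@inX _ L1) (@openX _ L2) (@inX _ L2) psi0)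
  (Hsurj : surjective_on (@inX _ L1) (@inX _ L2) psi0)
  (Hloc : local_homeo_on (@openX _ L1) (@inX _ L1) (@openX _ L2) (@inX _ L2) psi0)
  (Hshift : forall x, inX x -> psi0 (shiftX x) = shiftX (psi0 x))
  (l LL : nat) (Hl : 1 <= l) (HlL : l <= LL)
  (Ha : forall x x', inX x -> inX x' -> psi0 x = psi0 x' ->
          forall i, l.-1 <= i -> x i = x' i)
  (Psi : seq Sigma1 -> seq Sigma2)
  (Hb : forall x, inX x -> word l (psi0 x) = Psi (word LL x))
  (g : seq Sigma1 -> V L1 LL -> nat -> nat)
  (Hg_inj : forall v mu, inB v mu -> injective (g mu v))
  (Hg_cover : forall v mu, inB v mu -> forall n,
      exists nu, simv psi0 v mu nu /\ exists m, g nu v m = n)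
  (Hg_disj : forall v nu nu', simv psi0 v nu nu' ->
      forall m m', g nu v m = g nu' v m' -> nu = nu') :
  homeo_on (@openXN _ L1) (@inXN _ L1) (@openXN _ L2) (@inXN _ L2)
    (fun p : XT L1 * nat =>
       (psi0 p.1, g (word LL p.1) (vert LL LL p.1) p.2)).
Proof.
have psi0_cont := continuous_on_nbhd (@openXE _ L1) (@openXE _ L2)
  (@agree_refl _ L2) (@agree_trans _ L2) Hcont.
have psi0_lift := local_homeo_on_lift (@openXE _ L1) (@openXE _ L2)
  (@agree_refl _ L1) (@agree_trans _ L1) (@agree_le _ L2) Hloc.
apply: (homeo_on_nbhd (@openXNE _ L1) (@openXNE _ L2) (@agreeXN_refl _ L1)
  (@agreeXN_trans _ L1) (@agreeXN_refl _ L2) (@agreeXN_trans _ L2)).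
- by have [x] := inhabited_XT L1; exact: inhabits (x, 0).
- by case=> x n /Hcont.1.
- exact (xi_inj HL1 Hl HlL Ha Hg_inj Hg_disj).
- exact (xi_surj HL1 HL2 Hcont.1 Hsurj Hshift Hl HlL Ha Hb Hg_cover).
- exact (xi_cont psi0_cont g).
- exact (xi_open HL1 Hcont.1 psi0_lift Hl HlL Ha Hg_inj Hg_disj).
Qed.
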